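(* Let $|\psi\rangle,|\phi\rangle$ be pure states in a finite-dimensional Hilbert space $\mathcal H$. For every $\alpha\in(0,1)\cup(1,2)$ and every $\beta\in(-\infty,0)\cup(0,+\infty)$, $$J_{\alpha,\beta}\big(|\psi\rangle\langle\psi|,|\phi\rangle\langle\phi|\big)=J'_{2-\alpha,\beta}\big(|\psi\rangle\langle\psi|,|\phi\rangle\langle\phi|\big).$$
   Context: For a density operator $\rho$, $\alpha\in(0,1)\cup(1,\infty)$, $\beta\in(-\infty,0)\cup(0,\infty)$, the quantum $(\alpha,\beta)$ entropy is $S_{\alpha,\beta}(\rho)=\frac{1}{(1-\alpha)\beta}\big[(\mathrm{Tr}\,\rho^{\alpha})^{\beta}-1\big]$ and the quantum $(\alpha,\beta)$-relative entropy is $D_{\alpha,\beta}(\rho\|\sigma)=\frac{1}{(1-\alpha)\beta}\big[1-(\mathrm{Tr}(\rho^{\alpha}\sigma^{1-\alpha}))^{\beta}\big]$, where any negative power of a density operator is taken only on its support (zero eigenvalues are kept as zero). The two quantum $(\alpha,\beta)$ Jensen–Shannon divergences are $J_{\alpha,\beta}(\rho,\sigma)=S_{\alpha,\beta}\big(\tfrac{\rho+\sigma}{2}\big)-\tfrac12 S_{\alpha,\beta}(\rho)-\tfrac12 S_{\alpha,\beta}(\sigma)$ and $J'_{\alpha,\beta}(\rho,\sigma)=\tfrac12\big[D_{\alpha,\beta}\big(\rho\|\tfrac{\rho+\sigma}{2}\big)+D_{\alpha,\beta}\big(\sigma\|\tfrac{\rho+\sigma}{2}\big)\big]$. *)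

From HB Require Import structures.
From mathcomp Require Import all_boot all_order all_algebra.
From mathcomp Require Import all_classical all_reals.
From mathcomp Require Import exp.
From mathcomp Require complex.
Import complex.

Set Implicit Arguments.
Unset Strict Implicit.
Unset Printing Implicit Defensive.
Import Order.TTheory GRing.Theory Num.Theory.
Local Open Scope ring_scope.
Local Open Scope sesquilinear_scope.

Section QJS.
Variable R : realType.
Local Notation C := R[i].

(* real power of a (real, nonnegative) eigenvalue; zero eigenvalues are kept
   as zero (powers are taken on the support only) *)
Definition eigpow (z : C) (a : R) : R :=
  if z == 0 then 0 else (complex.Re z) `^ a.

(* A^a := U^* diag(lambda_i^a) U, where A = U^-1 diag(lambda) U is the spectral
   decomposition (U = spectralmx A unitary, lambda = spectral_diag A). *)
Definition mxpowR n (A : 'M[C]_n) (a : R) : 'M[C]_n :=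
  (spectralmx A)^t* *m diag_mx (\row_i (eigpow (spectral_diag A 0 i) a)%:C%C)
    *m spectralmx A.

(* real part of the trace (all traces used below are real) *)
Definition trR n (A : 'M[C]_n) : R := complex.Re (\tr A).

Definition Sab n (a b : R) (rho : 'M[C]_n) : R :=
  ((trR (mxpowR rho a)) `^ b - 1) / ((1 - a) * b).

Definition Dab n (a b : R) (rho sigma : 'M[C]_n) : R :=
  (1 - (trR (mxpowR rho a *m mxpowR sigma (1 - a))) `^ b) / ((1 - a) * b).

Definition mixmx n (rho sigma : 'M[C]_n) : 'M[C]_n := (2%:R)^-1 *: (rho + sigma).

Definition Jab n (a b : R) (rho sigma : 'M[C]_n) : R :=
  Sab a b (mixmx rho sigma) - 2^-1 * Sab a b rho - 2^-1 * Sab a b sigma.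

Definition J'ab n (a b : R) (rho sigma : 'M[C]_n) : R :=
  2^-1 * (Dab a b rho (mixmx rho sigma) + Dab a b sigma (mixmx rho sigma)).

Definition ketbra n (psi : 'cV[C]_n) : 'M[C]_n := psi *m psi^t*.

Definition unit_ket n (psi : 'cV[C]_n) : Prop := psi^t* *m psi = 1%:M.

End QJS.

From HB Require Import structures.
From mathcomp Require Import all_boot all_order all_algebra.
From mathcomp Require Import all_classical all_reals.
From mathcomp Require Import exp ring.
From mathcomp Require complex.
Import complex.
Import Order.TTheory GRing.Theory Num.Theory.
Local Open Scope ring_scope.
Local Open Scope sesquilinear_scope.
Set Implicit Arguments.
Unset Strict Implicit.
Unset Printing Implicit Defensive.

(* For a pure state [rho] every power [rho^s] is [rho] itself and [tr rho = 1], so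
   [S_{a,b}(rho) = 0] and [J_{a,b}] reduces to [S_{a,b}(M)], [M = (rho + sigma)/2].
   Since [rho] and [sigma] are projections, [(rho - sigma) M + M (rho - sigma)
   = rho - sigma]; in an eigenbasis of [M] this kills the diagonal of
   [rho - sigma] outside the eigenvalue [1/2], so [tr ((rho - sigma) M^s)] is a
   multiple of [tr (rho - sigma) = 0].  Hence [tr (rho M^s) = tr (M M^s)
   = tr M^(s+1)], and with [s = a - 1] both relative entropies in [J'_{2-a,b}]
   equal [S_{a,b}(M)]. *)

Section Unitary.
Context {C : numClosedFieldType}.

Lemma unitarymx_adjKmx n (P : 'M[C]_n) : P \is unitarymx -> P^t* *m P = 1%:M.
Proof. by move=> uP; rewrite -[P^t*]mul1mx mulmxKtV. Qed.

Lemma mxtrace_unitary_conj n (P X : 'M[C]_n) :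
  P \is unitarymx -> \tr (P *m X *m P^t*) = \tr X.
Proof. by move=> uP; rewrite mxtrace_mulC mulmxA unitarymx_adjKmx // mul1mx. Qed.

Lemma mxtrace_unitary_adjconj n (P X : 'M[C]_n) :
  P \is unitarymx -> \tr (P^t* *m X *m P) = \tr X.
Proof. by move=> uP; rewrite mxtrace_mulC mulmxA (unitarymxP uP) mul1mx. Qed.

Lemma unitary_conjM n (P X Y : 'M[C]_n) : P \is unitarymx ->
  (P *m X *m P^t*) *m (P *m Y *m P^t*) = P *m (X *m Y) *m P^t*.
Proof.
by move=> uP; rewrite !mulmxA -[P *m X *m P^t* *m P]mulmxA unitarymx_adjKmx // mulmx1.
Qed.

Lemma adjmx_normalmx n (A : 'M[C]_n) : A^t* = A -> A \is normalmx.
Proof. by move=> hA; apply/normalmxP; rewrite hA. Qed.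

Lemma spectral_decomposition n (A : 'M[C]_n) : A \is normalmx ->
  A = (spectralmx A)^t* *m diag_mx (spectral_diag A) *m spectralmx A.
Proof.
by move/orthomx_spectralP => {1}->; rewrite invmx_unitary // spectral_unitarymx.
Qed.

Lemma spectral_diag_conj n (A : 'M[C]_n) : A \is normalmx ->
  diag_mx (spectral_diag A) = spectralmx A *m A *m (spectralmx A)^t*.
Proof.
move=> nA; have E := spectral_decomposition nA; have uP := spectral_unitarymx A.
move: uP E; set P := spectralmx A => uP E.
by rewrite [in RHS]E !mulmxA (unitarymxP uP) mul1mx mulmxtVK.
Qed.

Lemma adjmx_mul_diag_ge0 m n (X : 'M[C]_(m, n)) i : 0 <= (X^t* *m X) i i.
Proof.
rewrite mxE; apply: sumr_ge0 => k _.
by rewrite !mxE mulrC mul_conjC_ge0.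
Qed.

(* A hermitian idempotent [A] equals [A^t* *m A]. *)
Lemma proj_conj_diag_ge0 n (P A : 'M[C]_n) i :
  A^t* = A -> A *m A = A -> 0 <= (P *m A *m P^t*) i i.
Proof.
move=> hA iA; have -> : A = A^t* *m A by rewrite hA iA.
have -> : P *m (A^t* *m A) *m P^t* = (A *m P^t*)^t* *m (A *m P^t*).
  by rewrite trmx_mul map_mxM trmxCK !mulmxA.
exact: adjmx_mul_diag_ge0.
Qed.

End Unitary.

Section Anticommutator.
Variable F : numFieldType.

Lemma idem_sub_mid_anticomm n (A B : 'M[F]_n) : A *m A = A -> B *m B = B ->
  (A - B) *m (2^-1 *: (A + B)) + (2^-1 *: (A + B)) *m (A - B) = A - B.
Proof.
move=> iA iB; rewrite -scalemxAr -scalemxAl -scalerDr.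
rewrite mulmxDr mulmxBr addrACA -mulmxBl -mulmxDl.
rewrite addrACA addNr addr0 opprD addrACA subrr add0r -opprD mulNmx.
rewrite !mulmxDl iA iB -!mulr2n -mulrnBl -scaler_nat scalerA mulVf ?scale1r //.
by rewrite pnatr_eq0.
Qed.

(* The diagonal of [X d + d X = X] reads [X_ii (2 d_i - 1) = 0], so only the
   entries of [e] where [d] equals [1/2] contribute to the trace. *)
Lemma mxtrace_anticomm_diag n (X : 'M[F]_n) (d e : 'rV[F]_n) c :
  X *m diag_mx d + diag_mx d *m X = X ->
  (forall i, d 0 i = 2^-1 -> e 0 i = c) ->
  \tr (X *m diag_mx e) = c * \tr X.
Proof.
move=> XdX de; rewrite mulr_sumr; apply: eq_bigr => i _.
rewrite mul_mx_diag mxE mulrC.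
have [->|Xii_neq0] := eqVneq (X i i) 0; first by rewrite !mulr0.
have /matrixP /(_ i i) := XdX; rewrite mxE mul_mx_diag mul_diag_mx !mxE => Xii.
have Xii_d : X i i * (2 * d 0 i - 1) = X i i * d 0 i + d 0 i * X i i - X i i.
  by ring.
rewrite Xii subrr in Xii_d; move/eqP: Xii_d.
rewrite mulf_eq0 (negbTE Xii_neq0) subr_eq0 => /eqP d2.
by rewrite de // -[d 0 i](mulKf (_ : 2 != 0)) ?d2 ?mulr1 // pnatr_eq0.
Qed.

End Anticommutator.

Section MatrixPower.
Variable R : realType.
Local Notation C := (complex.complex R).

Lemma eigpow_mul (r : R) s : 0 <= r ->
  r%:C%C * (eigpow r%:C%C s)%:C%C = (eigpow r%:C%C (s + 1))%:C%C.
Proof.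
move=> r_ge0; rewrite /eigpow.
have -> : (r%:C%C == 0) = (r == 0) by rewrite eq_complex /= eqxx andbT.
have [->|r_neq0] := eqVneq r 0; first by rewrite mul0r.
by rewrite /= powRD ?r_neq0 ?implybT // powRr1 // -rmorphM mulrC.
Qed.

Lemma eigpow_idem (z : C) s : z * z = z -> (eigpow z s)%:C%C = z.
Proof.
move=> zz; have : z * (z - 1) = 0 by rewrite mulrBr mulr1 zz subrr.
rewrite /eigpow; move/eqP; rewrite mulf_eq0 subr_eq0 => /orP[]/eqP->.
  by rewrite eqxx.
by rewrite oner_eq0 /= powR1.
Qed.

Lemma mxpowR_idem n (A : 'M[C]_n) s :
  A \is normalmx -> A *m A = A -> mxpowR A s = A.
Proof.
move=> nA iA; have uP := spectral_unitarymx A.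
have dd : diag_mx (spectral_diag A) *m diag_mx (spectral_diag A) =
          diag_mx (spectral_diag A).
  by rewrite (spectral_diag_conj nA) unitary_conjM // iA.
rewrite /mxpowR; set P := spectralmx A; set d := spectral_diag A.
suff -> : \row_i (eigpow (d 0 i) s)%:C%C = d by rewrite -spectral_decomposition.
apply/rowP => i; rewrite mxE eigpow_idem //.
by have /matrixP /(_ i i) := dd; rewrite mul_diag_mx !mxE eqxx !mulr1n.
Qed.

Lemma mxtrace_mul_mxpowR n (A : 'M[C]_n) s : A \is normalmx ->
  (forall i, 0 <= spectral_diag A 0 i) ->
  \tr (A *m mxpowR A s) = \tr (mxpowR A (s + 1)).
Proof.
move=> nA d_ge0; have uP := spectral_unitarymx A.
have EA := spectral_decomposition nA.
rewrite /mxpowR; move: uP EA d_ge0.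
set P := spectralmx A; set d := spectral_diag A => uP EA d_ge0.
rewrite {1}EA !mulmxA -[P^t* *m diag_mx d *m P *m P^t*]mulmxA.
rewrite (unitarymxP uP) mulmx1 -[P^t* *m diag_mx d *m _]mulmxA mulmx_diag.
rewrite !mxtrace_unitary_adjconj // !mxtrace_diag.
apply: eq_bigr => i _; rewrite !mxE.
have := d_ge0 i; rewrite lecE; case: (d 0 i) => r t.
by case/andP => /eqP /= -> r_ge0; exact: eigpow_mul.
Qed.

Lemma mxtrace_anticomm_mxpowR n (A X : 'M[C]_n) s : A \is normalmx ->
  X *m A + A *m X = X -> \tr (X *m mxpowR A s) = (eigpow 2^-1 s)%:C%C * \tr X.
Proof.
move=> nA XA; have uP := spectral_unitarymx A; have dA := spectral_diag_conj nA.
move: uP dA; rewrite /mxpowR; set P := spectralmx A; set d := spectral_diag A.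
move=> uP dA; rewrite -(mxtrace_unitary_conj X uP) mulmxA mxtrace_mulC !mulmxA.
apply: (mxtrace_anticomm_diag (d := d)) => [|i di]; last by rewrite mxE di.
by rewrite dA !unitary_conjM // -mulmxDl -mulmxDr XA.
Qed.

End MatrixPower.

Section ProjectionMixture.
Variable R : realType.
Local Notation C := (complex.complex R).
Variables (n : nat) (A B : 'M[C]_n).
Hypotheses (hA : A^t* = A) (hB : B^t* = B) (iA : A *m A = A) (iB : B *m B = B).
Hypothesis trAB : \tr A = \tr B.

Lemma mixmx_adj : (mixmx A B)^t* = mixmx A B.
Proof.
apply/matrixP => i j.
have /matrixP /(_ i j) := hA; have /matrixP /(_ i j) := hB.
rewrite /mixmx !mxE => <- <-.
by rewrite rmorphM rmorphD fmorphV rmorph_nat.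
Qed.

Lemma mixmx_normal : mixmx A B \is normalmx.
Proof. exact/adjmx_normalmx/mixmx_adj. Qed.

Lemma spectral_diag_mixmx_ge0 i : 0 <= spectral_diag (mixmx A B) 0 i.
Proof.
have := spectral_diag_conj mixmx_normal.
move=> /matrixP /(_ i i); rewrite mxE eqxx mulr1n => ->.
rewrite /mixmx -scalemxAr -scalemxAl mulmxDr mulmxDl mxE mxE.
by rewrite mulr_ge0 ?invr_ge0 ?ler0n // addr_ge0 // proj_conj_diag_ge0.
Qed.

Lemma mxtrace_proj_mxpowR_mixmx s :
  \tr (A *m mxpowR (mixmx A B) s) = \tr (mxpowR (mixmx A B) (s + 1)).
Proof.
set M := mixmx A B.
have trD : \tr ((A - B) *m mxpowR M s) = 0.
  rewrite mxtrace_anticomm_mxpowR ?mixmx_normal //.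
    by rewrite raddfB /= trAB subrr mulr0.
  exact: idem_sub_mid_anticomm.
have trS : \tr ((A + B) *m mxpowR M s) = 2 * \tr (mxpowR M (s + 1)).
  rewrite -mxtrace_mul_mxpowR ?mixmx_normal //; last exact: spectral_diag_mixmx_ge0.
  by rewrite -mxtraceZ scalemxAl /M /mixmx scalerA divff ?scale1r // pnatr_eq0.
rewrite mulmxBl raddfB /= in trD; rewrite mulmxDl raddfD /= in trS.
move/eqP: trD; rewrite subr_eq0 => /eqP trAB_M.
apply: (@mulfI _ 2); first by rewrite pnatr_eq0.
by rewrite -trS -trAB_M mulr_natl mulr2n.
Qed.

End ProjectionMixture.

Section PureStates.
Variable R : realType.
Local Notation C := (complex.complex R).

Lemma ketbra_adj n (psi : 'cV[C]_n) : (ketbra psi)^t* = ketbra psi.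
Proof. by rewrite /ketbra trmx_mul map_mxM trmxCK. Qed.

Lemma ketbra_idem n (psi : 'cV[C]_n) : unit_ket psi ->
  ketbra psi *m ketbra psi = ketbra psi.
Proof. by move=> u; rewrite /ketbra mulmxA -(mulmxA psi) u mulmx1. Qed.

Lemma mxtrace_ketbra n (psi : 'cV[C]_n) : unit_ket psi -> \tr (ketbra psi) = 1.
Proof. by move=> u; rewrite /ketbra mxtrace_mulC u mxtrace1. Qed.

Lemma mxpowR_ketbra n (psi : 'cV[C]_n) s : unit_ket psi ->
  mxpowR (ketbra psi) s = ketbra psi.
Proof.
by move=> u; rewrite mxpowR_idem ?adjmx_normalmx ?ketbra_adj ?ketbra_idem.
Qed.

Lemma mixmxC n (A B : 'M[C]_n) : mixmx A B = mixmx B A.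
Proof. by rewrite /mixmx addrC. Qed.

Lemma Sab_ketbra n (psi : 'cV[C]_n) a b : unit_ket psi -> Sab a b (ketbra psi) = 0.
Proof.
by move=> u; rewrite /Sab mxpowR_ketbra // /trR mxtrace_ketbra // powR1 subrr mul0r.
Qed.

Lemma Dab_ketbra_mixmx n (psi phi : 'cV[C]_n) a b :
  unit_ket psi -> unit_ket phi ->
  let M := mixmx (ketbra psi) (ketbra phi) in
  Dab (2 - a) b (ketbra psi) M = (1 - trR (mxpowR M a) `^ b) / ((a - 1) * b).
Proof.
move=> upsi uphi M; rewrite /Dab; have -> : 1 - (2 - a) = a - 1 by ring.
rewrite mxpowR_ketbra // /trR mxtrace_proj_mxpowR_mixmx ?subrK //;
  by rewrite ?ketbra_adj ?ketbra_idem ?mxtrace_ketbra.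
Qed.

End PureStates.

Theorem proposition1 (R : realType) (n : nat) (psi phi : 'cV[complex.complex R]_n)
  (a b : R) :
  unit_ket psi -> unit_ket phi ->
  (0 < a < 1 \/ 1 < a < 2) -> b != 0 ->
  Jab a b (ketbra psi) (ketbra phi) = J'ab (2 - a) b (ketbra psi) (ketbra phi).
Proof.
move=> upsi uphi _ _.
have Dphi := Dab_ketbra_mixmx a b uphi upsi; rewrite mixmxC in Dphi.
rewrite /Jab /J'ab !Sab_ketbra // Dab_ketbra_mixmx // Dphi.
rewrite mulr0 !subr0 mulrDr [2^-1 * _]mulrC -splitr.
by rewrite /Sab -opprB mulNr -mulrN -invrN -mulNr opprB.
Qed.
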